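(* Let $T>0$, $u_0\in C(\overline\Omega)$ with $u_0\ge0$, and $g\ge0$. Let $u\in C(\overline\Omega\times[0,T])$ be a supersolution of the problem $$u_t(x,t)=\int_GK_\epsilon(x,y)(u(y,t)-u(x,t))\,dy\ (x\in\Omega),\quad u(x,t)=g(x,t)\ (x\notin\Omega),\quad u(x,0)=u_0(x)\ (x\in\Omega).$$ Then $u\ge0$.
   Context: $G$ is a Carnot group, $\Omega\subset G$ a bounded connected open set, and $K_\epsilon(x,y)$ is the positive kernel $$K_\epsilon(x,y)=\frac{c(x)}{\epsilon^{Q+2}}a\big((\exp(E(x)\exp^{-1}(y^{-1}x)))^{-1}\big)J\big(\exp(L^{-1}(x)\exp^{-1}(\delta_{\epsilon^{-1}}(y^{-1}x)))\big),$$ where: $\mathfrak g=V_1\oplus\dots\oplus V_m$ is the stratified Lie algebra with adapted basis $X_1,\dots,X_n$, $n_k=\dim V_k$, $Q=\sum kn_k$, $\lambda_j=k$ if $X_j\in V_k$, $\phi_i$ the coordinates w.r.t. the basis, matrices act on $\mathfrak g$ via these coordinates, $\delta_r(\sum x_jX_j)=\sum r^{\lambda_j}x_jX_j$ (transported to $G$ by $\exp$), Haar measure is Lebesgue measure via $\exp$; $J\in L^1(G)$ positive, compactly supported with support $F$, $J(x)=J(x^{-1})$, $\int_{\mathbb R^n}J(\exp\sum t_rX_r)t_i\,dt=0$, $\int_{\mathbb R^n}J(\exp\sum t_rX_r)t_it_j\,dt=C(J)\delta_{ij}$, $C(J)>0$; $\tilde A=(a_{ij})_{i,j\le n_1}$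 symmetric positive definite smooth on $\overline\Omega$ with Cholesky factor $\tilde L$, $A,L$ their $n\times n$ extensions by the identity block; $W=\mathrm{diag}(\tilde b_i)$ with $\tilde b_i=b_i$ ($i\le n_1$), $b_i/\epsilon^2$ ($n_1<i\le n_1+n_2$), $1$ otherwise, $b_i$ smooth; $F'=\{y\exp(\delta_\epsilon L(y)\exp^{-1}(z^{-1})):y\in\Omega,z\in F\}$; $a(x)=\sum_i\phi_i(\exp^{-1}x)+M$, $M>0$ large so $a\ge\beta>0$ on $F'$; $c(x)=2[C(J)M(\det A(x))^{1/2}]^{-1}$, $E(x)=\frac M2W(x)A(x)^{-1}$. A function $u\in C([0,T];L^1(\Omega))$ is a supersolution of the problem if $u_t(x,t)\ge\int_GK_\epsilon(x,y)(u(y,t)-u(x,t))\,dy$ for $x\in\Omega$, $t>0$; $u(x,t)\ge g(x,t)$ for $x\notin\Omega$, $t>0$; and $u(x,0)\ge u_0(x)$ for $x\in\Omega$. Subsolutions are defined with reversed inequalities.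
   Formalization: Nonnegativity of the kernel $K_\epsilon(x,y)$ for all x ∈ Ω and y ∈ G is an explicit hypothesis, not a consequence of choosing M large so that a ≥ β > 0 on F′. The statement above fails without it. *)

From HB Require Import structures.
From mathcomp Require Import all_boot all_order all_algebra.
From mathcomp Require Import all_classical all_reals all_analysis.
Import Order.TTheory GRing.Theory Num.Theory numFieldNormedType.Exports.

Set Implicit Arguments.
Unset Strict Implicit.
Unset Printing Implicit Defensive.

Local Open Scope classical_set_scope.
Local Open Scope ring_scope.

(* The Carnot group G is represented in exponential coordinates: a point of *)
(* G is identified with the coordinate row vector (phi_1,..,phi_n) of       *)
(* exp^{-1} x w.r.t. the adapted basis X_1..X_n.  Hence exp and exp^{-1}    *)
(* are the identity, the inverse is x |-> -x, and the group law is given by *)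
(* the (finite, since g is nilpotent) Baker-Campbell-Hausdorff-Dynkin       *)
(* formula for the Lie bracket of g.                                         *)

(* Lie bracket of g from structure constants: [X_i, X_j] = sum_k sc i j k X_k *)
Definition lie_br (R : realType) (n : nat) (sc : 'I_n -> 'I_n -> 'I_n -> R)
  (x y : 'rV[R]_n) : 'rV[R]_n :=
  \row_k \sum_i \sum_j x 0 i * y 0 j * sc i j k.

Definition ebasis (R : realType) {n : nat} (i : 'I_n) : 'rV[R]_n := delta_mx 0 i.

Fixpoint nested_br (V : Type) (z : V) (br : V -> V -> V) (w : seq V) : V :=
  match w with
  | [::] => z
  | a :: w' => match w' with
               | [::] => a
               | _ :: _ => br a (nested_br z br w')
               end
  end.

Definition dynkin_word (V : Type) (m k : nat)
  (ps : {ffun 'I_k -> 'I_m.+1 * 'I_m.+1}) (X Y : V) : seq V :=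
  flatten [seq nseq (ps i).1 X ++ nseq (ps i).2 Y | i <- enum 'I_k].

Definition dynkin_tot (m k : nat) (ps : {ffun 'I_k -> 'I_m.+1 * 'I_m.+1}) : nat :=
  (\sum_i ((ps i).1 + (ps i).2))%N.

(* BCH-Dynkin formula log(exp X exp Y), truncated at total degree m; for a  *)
(* Lie algebra nilpotent of step m all the omitted terms vanish.            *)
Definition bch (R : realType) (n : nat) (sc : 'I_n -> 'I_n -> 'I_n -> R)
  (m : nat) (X Y : 'rV[R]_n) : 'rV[R]_n :=
  \sum_(1 <= k < m.+1)
    \sum_(ps : {ffun 'I_k -> 'I_m.+1 * 'I_m.+1} |
          [forall i, (0 < (ps i).1 + (ps i).2)%N] && (dynkin_tot ps <= m)%N)
      (((-1) ^+ k.-1 / k%:R / (dynkin_tot ps)%:R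
         / (\prod_i (((ps i).1)`! * ((ps i).2)`!))%N%:R)
       *: nested_br 0 (lie_br sc) (dynkin_word ps X Y)).

Definition gmul (R : realType) (n : nat) (sc : 'I_n -> 'I_n -> 'I_n -> R)
  (m : nat) (x y : 'rV[R]_n) : 'rV[R]_n := bch sc m x y.

(* g = V_1 + ... + V_m is a stratified Lie algebra, X_1..X_n an adapted   *)
(* basis, lam j = k iff X_j \in V_k (lam nondecreasing = adapted ordering) *)
Definition stratified (R : realType) (n m : nat) (lam : 'I_n -> nat)
  (sc : 'I_n -> 'I_n -> 'I_n -> R) : Prop :=
  [/\ (1 <= m)%N,
      (* Lie algebra axioms (bilinearity is built in) *)
      (forall i j k, sc i j k = - sc j i k) /\
      (forall x y z : 'rV[R]_n,
          lie_br sc x (lie_br sc y z) + lie_br sc y (lie_br sc z x)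
          + lie_br sc z (lie_br sc x y) = 0),
      ((forall j, (1 <= lam j <= m)%N) /\
       (forall i j : 'I_n, (i <= j)%N -> (lam i <= lam j)%N) /\
       (forall k, (1 <= k <= m)%N -> exists j, lam j = k)),
      (* [V_1, V_k] \subset V_{k+1}, in particular [V_1, V_m] = 0 *)
      (forall i j l, lam i = 1%N -> sc i j l != 0 -> lam l = (lam j).+1)
    & (* [V_1, V_k] spans V_{k+1} for k < m *)
      (forall k, (1 <= k < m)%N -> forall v : 'rV[R]_n,
          (forall l, v 0 l != 0 -> lam l = k.+1) ->
          exists coef : 'I_n -> 'I_n -> R,
            v = \sum_(i | lam i == 1%N) \sum_(j | lam j == k)
                  coef i j *: lie_br sc (ebasis R i) (ebasis R j))].

Definition hdim (n : nat) (lam : 'I_n -> nat) : nat := (\sum_j lam j)%N.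

Definition dil (R : realType) (n : nat) (lam : 'I_n -> nat) (r : R)
  (x : 'rV[R]_n) : 'rV[R]_n := \row_j (r ^+ lam j * x 0 j).

(* matrices act on g through coordinates (column-vector convention) *)
Definition act (R : realType) (n : nat) (A : 'M[R]_n) (v : 'rV[R]_n) : 'rV[R]_n :=
  v *m A^T.

Fixpoint iter_dir (R : realType) (n : nat) (vs : seq 'rV[R]_n)
  (f : 'rV[R]_n -> R) : 'rV[R]_n -> R :=
  match vs with
  | [::] => f
  | v :: vs' => fun x => 'D_v (iter_dir vs' f) x
  end.

Definition smooth_on (R : realType) (n : nat) (U : set 'rV[R]_n)
  (f : 'rV[R]_n -> R) : Prop :=
  forall (vs : seq 'rV[R]_n) x, U x ->
    {for x, continuous (iter_dir vs f)} /\ forall v, derivable (iter_dir vs f) x v.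

(* smooth on the closure of O: smooth on an open neighbourhood of it *)
Definition smooth_on_closure (R : realType) (n : nat) (O : set 'rV[R]_n)
  (f : 'rV[R]_n -> R) : Prop :=
  exists U, [/\ open U, closure O `<=` U & smooth_on U f].

Definition rowt (R : realType) (n : nat) (t : n.-tuple R) : 'rV[R]_n :=
  \row_i tnth t i.

(* mu is Lebesgue measure on R^n (product sigma-algebra): it gives every  *)
(* half-open box its volume; this characterizes it uniquely.              *)
Definition is_lebesgue (R : realType) (n : nat)
  (mu : {measure set (n.-tuple R) -> \bar R}) : Prop :=
  forall a b : n.-tuple R, (forall i, tnth a i <= tnth b i) ->
    mu [set t | forall i, tnth a i < tnth t i <= tnth b i]
    = (\prod_i (tnth b i - tnth a i))%:E.

Definition Wmat (R : realType) (n : nat) (lam : 'I_n -> nat)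
  (b : 'I_n -> 'rV[R]_n -> R) (eps : R) (x : 'rV[R]_n) : 'M[R]_n :=
  diag_mx (\row_i (if lam i == 1%N then b i x
                   else if lam i == 2%N then b i x / eps ^+ 2 else 1)).

Definition aK (R : realType) (n : nat) (M : R) (x : 'rV[R]_n) : R :=
  \sum_i x 0 i + M.

Definition cK (R : realType) (n : nat) (CJ M : R) (A : 'rV[R]_n -> 'M[R]_n)
  (x : 'rV[R]_n) : R :=
  2 / (CJ * M * Num.sqrt (\det (A x))).

Definition EK (R : realType) (n : nat) (lam : 'I_n -> nat) (M eps : R)
  (A : 'rV[R]_n -> 'M[R]_n) (b : 'I_n -> 'rV[R]_n -> R) (x : 'rV[R]_n)
  : 'M[R]_n :=
  (M / 2) *: (Wmat lam b eps x *m invmx (A x)).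

Definition kernelK (R : realType) (n m : nat) (lam : 'I_n -> nat)
  (sc : 'I_n -> 'I_n -> 'I_n -> R) (eps CJ M : R)
  (A L : 'rV[R]_n -> 'M[R]_n) (b : 'I_n -> 'rV[R]_n -> R)
  (J : 'rV[R]_n -> R) (x y : 'rV[R]_n) : R :=
  let yix := gmul sc m (- y) x in
  cK CJ M A x / eps ^+ (hdim lam + 2)
  * aK M (- act (EK lam M eps A b x) yix)
  * J (act (invmx (L x)) (dil lam eps^-1 yix)).

Definition Fprime (R : realType) (n m : nat) (lam : 'I_n -> nat)
  (sc : 'I_n -> 'I_n -> 'I_n -> R) (eps : R) (L : 'rV[R]_n -> 'M[R]_n)
  (Om F : set 'rV[R]_n) : set 'rV[R]_n :=
  [set p | exists2 y, Om y & exists2 z, F z &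
           p = gmul sc m y (dil lam eps (act (L y) (- z)))].

Definition supersolution (R : realType) (n : nat)
  (mu : {measure set (n.-tuple R) -> \bar R})
  (K : 'rV[R]_n -> 'rV[R]_n -> R) (Om : set 'rV[R]_n) (T : R)
  (g : 'rV[R]_n -> R -> R) (u0 : 'rV[R]_n -> R)
  (u : 'rV[R]_n -> R -> R) : Prop :=
  [/\ (forall x t, Om x -> 0 < t < T ->
         derivable (u x) t 1 /\
         ((\int[mu]_yt (K x (rowt yt) * (u (rowt yt) t - u x t))%:E)
           <= ('D_1 (u x) t)%:E)%E),
      (forall x t, ~ Om x -> 0 < t <= T -> g x t <= u x t)
    & (forall x, Om x -> u0 x <= u x 0)].

From HB Require Import structures.
From mathcomp Require Import all_boot all_order all_algebra.
From mathcomp Require Import all_classical all_reals all_analysis.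
From mathcomp Require Import lra.
Import Order.TTheory GRing.Theory Num.Theory numFieldNormedType.Exports.
Local Open Scope classical_set_scope.
Local Open Scope ring_scope.

(* Only the positivity of the kernel matters.  Fix d > 0 and T' < T; by
   compactness u(x,t) + d t attains its minimum over closure(Om) x [0,T'] at
   some (x0,t0).  This minimum cannot be negative: outside Om one has
   u >= g >= 0 (extended to t = 0 by continuity in t), at t = 0 one has
   u >= u0 >= 0, and if x0 lies in Om and t0 > 0 then x0 minimises u(.,t0)
   over the whole group, so the nonlocal term of the supersolution inequality
   is nonnegative and u_t(x0,t0) >= 0, while minimality in time from the left
   gives u_t(x0,t0) <= -d.  Letting d -> 0 gives u >= 0 for t < T, and
   continuity extends this to t = T. *)

Lemma compact_closure_bounded (R : realType) n (A : set 'rV[R]_n) :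
  bounded_set A -> compact (closure A).
Proof.
move=> [M [M_real AM]]; apply: bounded_closed_compact; last exact: closed_closure.
exists M; split => // r /AM Ar.
have closed_ball : closed [set x : 'rV[R]_n | `|x| <= r].
  exact: (preimage_closed (fun x _ => @norm_continuous _ _ x) (@closed_le _ r)).
by move=> x /(closureS Ar); rewrite -(closure_id _).1.
Qed.

Lemma within_continuous_section {X Y Z : topologicalType} {f : X * Y -> Z}
    {A : set (X * Y)} (x : X) :
  {within A, continuous f} ->
  {within [set y | A (x, y)], continuous (f \o pair x)}.
Proof.
move=> /subspace_continuousP fA; apply/subspace_continuousP => y Axy.
apply: cvg_comp (fA _ Axy) => W /= [[P Q] /= [Px Qy] PQ].
rewrite nbhs_simpl /=; apply: filterS Qy => s Qs Axs; apply: PQ => //.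
by split => //; exact: nbhs_singleton.
Qed.

Lemma ge0_itvcc_of_itvoo {R : realType} {f : R -> R} {a b : R} : a < b ->
  {within `[a, b], continuous f} -> (forall t, a < t < b -> 0 <= f t) ->
  forall t, a <= t <= b -> 0 <= f t.
Proof.
move=> ab /(continuous_within_itvP _ ab)[_ fa fb] f_ge0 t.
rewrite le_eqVlt => /andP[/predU1P[<- _|a_lt_t]]; last first.
  rewrite le_eqVlt => /predU1P[->|t_lt_b]; last by apply: f_ge0; rewrite a_lt_t.
  apply: (closed_cvg _ (@closed_ge _ 0) _ _ fb).
  near=> s; apply: f_ge0; apply/andP; split; last by near: s; exact: nbhs_left_lt.
  by near: s; exact: nbhs_left_gt.
apply: (closed_cvg _ (@closed_ge _ 0) _ _ fa).
near=> s; apply: f_ge0; apply/andP; split; first by near: s; exact: nbhs_right_gt.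
by near: s; exact: nbhs_right_lt.
Unshelve. all: by end_near. Qed.

Lemma derive1_le0_at_left_min {R : realFieldType} {f : R -> R} {t r : R} :
  0 < r -> derivable f t 1 -> (forall s, t - r < s < t -> f t <= f s) ->
  'D_1 f t <= 0.
Proof.
move=> r_gt0 df tmin; rewrite ['D_1 f t]cvg_at_leftE //.
apply: limr_le.
  rewrite -(cvg_at_leftE (fun h => h^-1 *: ((f \o shift t) _ - f t))) //.
  apply: cvg_trans df; apply: cvg_app.
  move=> A [e e_gt0 Ae]; exists e => // h he h_lt0; apply: Ae => //.
  exact/ltr0_neq0.
near=> h; have h_lt0 : h < 0 by near: h; exact: nbhs_left_lt.
apply: mulr_le0_ge0; first by rewrite invr_le0 ltW.
rewrite subr_ge0 [_%:A]mulr1 /= addrC; apply: tmin.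
have : - r < h by near: h; apply: nbhs_left_gt; rewrite oppr_lt0.
lra.
Unshelve. all: by end_near. Qed.

Lemma derive1_add_linear (R : numFieldType) (f : R -> R) (d t : R) :
  derivable f t 1 -> 'D_1 (fun s => f s + d * s) t = 'D_1 f t + d.
Proof.
move=> df; have -> : (fun s => f s + d * s) = f + d \*: id by [].
rewrite deriveD // deriveZ; last exact: derivable_id.
by rewrite derive_id [_%:A]mulr1.
Qed.

Section nonlocal_minimum_principle.
Variables (R : realType) (n : nat) (mu : {measure set (n.-tuple R) -> \bar R}).
Variables (K : 'rV[R]_n -> 'rV[R]_n -> R) (Om : set 'rV[R]_n) (T : R).
Variables (u0 : 'rV[R]_n -> R) (g u : 'rV[R]_n -> R -> R).
Hypotheses (Om_bounded : bounded_set Om) (T_gt0 : 0 < T).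
Hypothesis K_ge0 : forall x y, Om x -> 0 <= K x y.
Hypothesis u0_ge0 : forall x, Om x -> 0 <= u0 x.
Hypothesis g_ge0 : forall x t, ~ Om x -> 0 < t -> 0 <= g x t.
Hypothesis u_cont : {within [set p | closure Om p.1 /\ 0 <= p.2 <= T],
  continuous (fun p => u p.1 p.2)}.
Hypothesis u_super : supersolution mu K Om T g u0 u.

Lemma supersolution_continuous_in_time x :
  closure Om x -> {within `[0, T], continuous (u x)}.
Proof.
move=> clx; have := within_continuous_section x u_cont.
rewrite (_ : [set _ | _] = `[0, T]%classic) //.
by apply/seteqP; split => s /=; rewrite in_itv /=; [case | split].
Qed.

Lemma supersolution_ge0_exterior x : closure Om x -> ~ Om x ->
  forall t, 0 <= t <= T -> 0 <= u x t.
Proof.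
move=> clx nOx; have [_ u_bd _] := u_super.
apply: ge0_itvcc_of_itvoo T_gt0 (supersolution_continuous_in_time x clx) _.
move=> t /andP[t_gt0 t_lt_T].
apply: le_trans (g_ge0 x t nOx t_gt0) _; apply: u_bd => //.
by rewrite t_gt0 ltW.
Qed.

Lemma supersolution_ge0_initial x : closure Om x -> 0 <= u x 0.
Proof.
move=> clx; have [_ _ u_init] := u_super.
have [Ox|nOx] := pselect (Om x); first exact: le_trans (u0_ge0 x Ox) (u_init _ Ox).
by apply: supersolution_ge0_exterior; rewrite // lexx ltW.
Qed.

Lemma supersolution_derive_ge0_at_min x t : Om x -> 0 < t < T ->
  (forall y, u x t <= u y t) -> 0 <= 'D_1 (u x) t.
Proof.
move=> Ox t_itv u_min; have [u_de _ _] := u_super.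
rewrite -lee_fin; apply: le_trans (u_de x t Ox t_itv).2.
apply: integral_ge0 => y _; rewrite lee_fin mulr_ge0 ?K_ge0 //.
by rewrite subr_ge0.
Qed.

Lemma supersolution_perturbed_min_ge0 {T' d : R} {x0 t0} : T' < T -> 0 < d ->
  closure Om x0 -> 0 <= t0 <= T' ->
  (forall y s, closure Om y -> 0 <= s <= T' ->
     u x0 t0 + d * t0 <= u y s + d * s) ->
  0 <= u x0 t0 + d * t0.
Proof.
move=> T'_lt_T d_gt0 clx0 /andP[t0_ge0 t0_le_T'] v_min.
rewrite leNgt; apply/negP => v_lt0.
have t0_lt_T : t0 < T by exact: le_lt_trans T'_lt_T.
have u_lt0 : u x0 t0 < 0 by have := mulr_ge0 (ltW d_gt0) t0_ge0; lra.
have Ox0 : Om x0.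
  apply: contrapT => nOx0; move: u_lt0; apply/negP; rewrite -leNgt.
  by apply: supersolution_ge0_exterior; rewrite // t0_ge0 ltW.
have t0_gt0 : 0 < t0.
  rewrite lt_def t0_ge0 andbT; apply/negP => /eqP t0_eq0; move: u_lt0.
  by rewrite t0_eq0; apply/negP; rewrite -leNgt supersolution_ge0_initial.
have t0_itv : 0 < t0 < T by rewrite t0_gt0.
have [u_de u_bd _] := u_super; have u_derivable := (u_de _ _ Ox0 t0_itv).1.
have u_min_space y : u x0 t0 <= u y t0.
  have [cly|ncly] := pselect (closure Om y).
    by have := v_min y t0 cly; rewrite t0_ge0 t0_le_T'; lra.
  have nOy : ~ Om y by move/subset_closure.
  have := le_trans (g_ge0 y t0 nOy t0_gt0) (u_bd _ _ nOy _).
  by rewrite t0_gt0 ltW //; lra.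
have Du_ge0 := supersolution_derive_ge0_at_min x0 t0 Ox0 t0_itv u_min_space.
have Du_le : 'D_1 (fun s => u x0 s + d * s) t0 <= 0.
  apply: (derive1_le0_at_left_min t0_gt0); first exact: (derivableD u_derivable).
  move=> s /andP[s_gt0 s_lt_t0].
  by apply: v_min => //; apply/andP; split; lra.
by move: Du_le; rewrite derive1_add_linear //; lra.
Qed.

Lemma supersolution_perturbed_ge0 {T' d : R} : T' < T -> 0 < d ->
  forall x t, closure Om x -> 0 <= t <= T' -> 0 <= u x t + d * t.
Proof.
move=> T'_lt_T d_gt0 x t clx t_itv.
pose v (p : 'rV[R]_n * R) := u p.1 p.2 + d * p.2.
have [[x0 t0] /set_mem [/= clx0 t0_itv] v_min] :
    exists2 p, p \in closure Om `*` `[0, T'] &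
      forall q, q \in closure Om `*` `[0, T'] -> v p <= v q.
  apply: compact_EVT_min; first by exists (x, t); split; rewrite //= in_itv.
    apply: compact_setX; first exact: compact_closure_bounded.
    exact: segment_compact.
  apply: within_continuousD; last first.
    apply: continuous_subspaceT => p.
    by apply: cvgM; [exact: cvg_cst | exact: cvg_snd].
  apply: continuous_subspaceW u_cont => -[y s] /= [cly].
  by rewrite in_itv /= => /andP[-> /le_trans->] //; rewrite ltW.
have v_ge_min y s : closure Om y -> 0 <= s <= T' -> v (x0, t0) <= v (y, s).
  by move=> cly s_itv; apply: v_min; apply/mem_set; split; rewrite ?in_itv.
apply: le_trans (v_ge_min x t clx t_itv).
apply: (supersolution_perturbed_min_ge0 T'_lt_T d_gt0 clx0 _ v_ge_min).
by move: t0_itv; rewrite /= in_itv.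
Qed.

Theorem supersolution_ge0 x t : closure Om x -> 0 <= t <= T -> 0 <= u x t.
Proof.
move=> clx; move: t; apply: ge0_itvcc_of_itvoo T_gt0 _ _.
  exact: supersolution_continuous_in_time.
move=> t /andP[t_gt0 t_lt_T]; apply/ler_addgt0Pr => e e_gt0.
have := supersolution_perturbed_ge0 t_lt_T (divr_gt0 e_gt0 t_gt0) x t clx.
by rewrite divfK ?gt_eqF // lexx ltW //; apply.
Qed.

End nonlocal_minimum_principle.

Arguments supersolution_ge0 {R n mu K Om T u0 g u}.

Theorem lemma4p3
  (R : realType) (n m : nat) (lam : 'I_n -> nat)
  (sc : 'I_n -> 'I_n -> 'I_n -> R)
  (Hstrat : stratified m lam sc)
  (mu : {measure set (n.-tuple R) -> \bar R}) (Hmu : is_lebesgue mu)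
  (Om : set 'rV[R]_n)
  (HOm_open : open Om) (HOm_conn : connected Om) (HOm_bdd : bounded_set Om)
  (eps : R) (Heps : 0 < eps)
  (* J and C(J) *)
  (J : 'rV[R]_n -> R) (CJ : R)
  (HJpos : forall x, 0 <= J x)
  (HJint : mu.-integrable setT (fun t => (J (rowt t))%:E))
  (HJsupp : compact (closure [set x | J x != 0]))
  (HJsym : forall x, J (- x) = J x)
  (HJ1 : forall i, (\int[mu]_t (J (rowt t) * tnth t i)%:E = 0%:E)%E)
  (HJ2 : forall i j, (\int[mu]_t (J (rowt t) * tnth t i * tnth t j)%:E
                      = (CJ * (i == j)%:R)%:E)%E)
  (HCJ : 0 < CJ)
  (* A (extension of A~ by the identity), its Cholesky factor L *)
  (A L : 'rV[R]_n -> 'M[R]_n)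
  (HAid : forall x i j, closure Om x -> (lam i != 1%N) || (lam j != 1%N) ->
            A x i j = (i == j)%:R)
  (HAsym : forall x i j, closure Om x -> A x i j = A x j i)
  (HApd : forall x (v : 'rV[R]_n), closure Om x -> v != 0 ->
            0 < (v *m A x *m v^T) 0 0)
  (HAsmooth : forall i j, lam i = 1%N -> lam j = 1%N ->
            smooth_on_closure Om (fun x => A x i j))
  (HLid : forall x i j, closure Om x -> (lam i != 1%N) || (lam j != 1%N) ->
            L x i j = (i == j)%:R)
  (HLlow : forall x (i j : 'I_n), closure Om x -> (i < j)%N -> L x i j = 0)
  (HLdiag : forall x i, closure Om x -> 0 < L x i i)
  (HLchol : forall x, closure Om x -> A x = L x *m (L x)^T)
  (* b_i *)
  (b : 'I_n -> 'rV[R]_n -> R)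
  (Hbsmooth : forall i, (lam i <= 2)%N -> smooth_on_closure Om (b i))
  (* M and a *)
  (M : R) (HM : 0 < M)
  (HMa : exists2 beta : R, 0 < beta &
           forall p, Fprime m lam sc eps L Om (closure [set x | J x != 0]) p ->
             beta <= aK M p)
  (* K_eps is a positive kernel *)
  (HKpos : forall x y, Om x -> 0 <= kernelK m lam sc eps CJ M A L b J x y)
  (* data of the problem *)
  (T : R) (HT : 0 < T)
  (u0 : 'rV[R]_n -> R)
  (Hu0c : {within closure Om, continuous u0})
  (Hu0 : forall x, closure Om x -> 0 <= u0 x)
  (g : 'rV[R]_n -> R -> R)
  (Hg : forall x t, ~ Om x -> 0 < t -> 0 <= g x t)
  (u : 'rV[R]_n -> R -> R)
  (Huc : {within [set p : 'rV[R]_n * R | closure Om p.1 /\ 0 <= p.2 <= T],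
            continuous (fun p => u p.1 p.2)})
  (Hsup : supersolution mu (kernelK m lam sc eps CJ M A L b J) Om T g u0 u) :
  forall x t, closure Om x -> 0 <= t <= T -> 0 <= u x t.
Proof.
apply: (supersolution_ge0 HOm_bdd HT HKpos _ Hg Huc Hsup).
by move=> x Ox; apply: Hu0; exact: subset_closure.
Qed.
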